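(* For all $\mathfrak a\in I_K$ and all $b\in\mathbb N$ we have $R_b(\mathfrak a^2,1)\neq\emptyset$.
   Context: Let $K$ be a real quadratic number field with odd discriminant $D$, ring of integers $\mathcal O_K$, conjugation $x\mapsto x'$, norm $N(x)=xx'$. Let $I_K$ be the group of nonzero fractional ideals and $N(\mathfrak a)\in\mathbb Q_{>0}$ the absolute norm of $\mathfrak a\in I_K$ (multiplicative, with $N(x\mathcal O_K)=|N(x)|$). For $b\in\mathbb N$, $\mathfrak a\in I_K$, $m\in\mathbb Z$ let $R_b(\mathfrak a,m)=\{\lambda\in\mathfrak a/b\mathfrak a : N(\lambda)/N(\mathfrak a)\equiv m\pmod b\}$ (well defined since $N(\lambda)/N(\mathfrak a)\in\mathbb Z$ for $\lambda\in\mathfrak a$ and its class mod $b$ depends only on $\lambda$ mod $b\mathfrak a$). *)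

(* Concrete model of the real quadratic field K of odd
   discriminant D (D > 1, D = 1 mod 4, D squarefree):
   an element x : K is a pair of rationals (x.1, x.2) standing for
   x.1 + x.2 * w, where w = (1 + sqrt D)/2, so O_K = Z + Z w and
   w^2 = w + (D-1)/4. *)
From mathcomp Require Import all_boot all_order all_algebra.
From Stdlib Require Import ClassicalEpsilon.
Set Implicit Arguments. Unset Strict Implicit. Unset Printing Implicit Defensive.
Import Order.TTheory GRing.Theory Num.Theory.
Local Open Scope ring_scope.

Definition squarefree_int (D : int) : Prop :=
  forall p : nat, prime p -> ~~ ((p * p)%:Z %| D)%Z.

Definition K : Type := (rat * rat)%type.

Definition wconst (D : int) : rat := (D%:~R - 1) / 4.

Definition Kzero : K := (0, 0).
Definition Kadd (x y : K) : K := (x.1 + y.1, x.2 + y.2).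
Definition Kscale (n : int) (x : K) : K := (n%:~R * x.1, n%:~R * x.2).
Definition Kmul (D : int) (x y : K) : K :=
  (x.1 * y.1 + x.2 * y.2 * wconst D, x.1 * y.2 + x.2 * y.1 + x.2 * y.2).
(* Galois conjugation: w' = 1 - w *)
Definition Kconj (x : K) : K := (x.1 + x.2, - x.2).
(* N(x) = x x' *)
Definition Knorm (D : int) (x : K) : rat :=
  x.1 ^+ 2 + x.1 * x.2 - wconst D * x.2 ^+ 2.

Definition isint (q : rat) : bool := denq q == 1.
Definition in_OK (x : K) : bool := isint x.1 && isint x.2.

Definition frac_ideal (D : int) (A : K -> Prop) : Prop :=
  [/\ A Kzero,
      (forall x y, A x -> A y -> A (Kadd x y)),
      (forall r x, in_OK r -> A x -> A (Kmul D r x)),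
      (exists x, A x /\ x <> Kzero) &
      (exists d : int, d != 0 /\ forall x, A x -> in_OK (Kscale d x))].

Definition ideal_mul (D : int) (A B : K -> Prop) : K -> Prop :=
  fun x => exists s : seq (K * K),
    (forall p, p \in s -> A p.1 /\ B p.2) /\
    x = foldr (fun p acc => Kadd (Kmul D p.1 p.2) acc) Kzero s.

Definition Kdet (v1 v2 : K) : rat := v1.1 * v2.2 - v1.2 * v2.1.

Definition Zbasis (A : K -> Prop) (v1 v2 : K) : Prop :=
  Kdet v1 v2 != 0 /\
  forall x, A x <-> exists m n : int, x = Kadd (Kscale m v1) (Kscale n v2).

(* absolute norm N(A) = [O_K : A] (generalized index) = |det| of a Z-basis *)
Definition ideal_norm (A : K -> Prop) : rat :=
  epsilon (inhabits 0)
    (fun q => exists v1 v2, Zbasis A v1 v2 /\ q = `|Kdet v1 v2|).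

From mathcomp Require Import all_boot all_order all_algebra.
From mathcomp Require Import ring.
From Stdlib Require Import ClassicalEpsilon.
Import Order.TTheory GRing.Theory Num.Theory.
Local Open Scope ring_scope.
Set Implicit Arguments. Unset Strict Implicit.

(* Write w = (1 + sqrt D)/2, so that w^2 = w + M with M = (D - 1)/4 integral.
   1. Subgroups of Q with bounded denominators are cyclic; applied to the
      rational points and to the w-coordinates of A, and using that the norm
      form is anisotropic (D squarefree), this gives the standard basis
      A = Z s a + Z s (t + w), s > 0, a > 0, t^2 + t - M = a e
      (ideal_standard_basis).
   2. For alpha = X s a + Y s (t + w) one has N(alpha) = s^2 a f(X, Y) with
      f = a X^2 + (2t + 1) X Y + e Y^2 of discriminant D, hence primitive.
   3. With h = gcd(a, 2t + 1), A^2 has the explicit Z-basis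
      s^2 a (a / h), s^2 (h (t + w) - y0 a e), so N(A^2) = s^4 a^2; the norm of
      a lattice does not depend on the chosen Z-basis (ideal_sq_norm).
   4. A primitive form represents a value f coprime to b; if u f = 1 (mod b),
      lam = u alpha^2 satisfies N(lam) / N(A^2) = (u f)^2 = 1 (mod b). *)

Lemma isintP (q : rat) : isint q <-> exists n : int, q = n%:~R.
Proof. by rewrite /isint -Qint_def; split => [/intrP | /intrP]. Qed.

Lemma isint_int (n : int) : isint n%:~R.
Proof. by apply/isintP; exists n. Qed.

Lemma Kext (x y : K) : x.1 = y.1 -> x.2 = y.2 -> x = y.
Proof. by case: x => ? ?; case: y => ? ? /= -> ->. Qed.

Lemma Knorm_mul (D : int) (x y : K) :
  Knorm D (Kmul D x y) = Knorm D x * Knorm D y.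
Proof. by rewrite /Knorm /Kmul /=; ring. Qed.

Lemma Knorm_scale (D n : int) (x : K) :
  Knorm D (Kscale n x) = n%:~R ^+ 2 * Knorm D x.
Proof. by rewrite /Knorm /Kscale /=; ring. Qed.

Lemma rat_sq_neq_sqf (D : int) : 1 < D -> squarefree_int D ->
  forall r : rat, r ^+ 2 != D%:~R.
Proof.
move=> D1 hsq r; apply/eqP => hr.
have hz : numq r ^+ 2 = D * denq r ^+ 2.
  apply: (@intr_inj rat); rewrite rmorphXn rmorphM rmorphXn /= -hr.
  have dpos : (0 : rat) < (denq r)%:~R by rewrite ltr0z denq_gt0.
  have := divq_num_den r; move: (numq r) (denq r) dpos => n d dpos <-.
  by field; rewrite gt_eqF.
have hn : (`|numq r| ^ 2 = `|D| * `|denq r| ^ 2)%N by rewrite -!abszX hz abszM.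
have den1 : `|denq r|%N = 1%N.
  have dv : (`|denq r| ^ 2 %| `|numq r| ^ 2)%N by rewrite hn dvdn_mull.
  have cop : coprime (`|denq r| ^ 2) (`|numq r| ^ 2).
    by rewrite coprime_pexpl // coprime_pexpr // coprime_sym coprime_num_den.
  move: (gcdn_idPl dv); rewrite (eqP cop) => /esym /eqP.
  by rewrite -mulnn muln_eq1 => /andP [/eqP].
rewrite den1 exp1n muln1 in hn.
have num1 : (1 < `|numq r|)%N.
  have D1' : (1 < `|D|)%N by case: D D1 {hsq hr hz hn} => // n; rewrite ltz_nat.
  rewrite ltnNge; apply/negP => h; move: D1'; rewrite -hn.
  by case: (`|numq r|%N) h => [|[|]].
have := hsq _ (pdiv_prime num1); rewrite dvdzE /=.
by rewrite -hn -mulnn dvdn_mul // pdiv_dvd.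
Qed.

(* The norm form is anisotropic: (2 x1 + x2)^2 = D x2^2 when N(x) = 0, and
   D is not a rational square. *)
Lemma Knorm_eq0 (D : int) (x : K) : 1 < D -> squarefree_int D ->
  Knorm D x = 0 -> x = Kzero.
Proof.
case: x => x1 x2 D1 hsq; rewrite /Knorm /= => hN.
have [x20 | x2n0] := eqVneq x2 0.
  have : x1 ^+ 2 = 0 by rewrite -hN x20; ring.
  by move/eqP; rewrite expf_eq0 /= => /eqP ->; rewrite x20.
case/negP: (rat_sq_neq_sqf D1 hsq ((2 * x1 + x2) / x2)); apply/eqP.
have -> : (D%:~R : rat) = 4 * wconst D + 1 by rewrite /wconst; field.
have hw : wconst D = (x1 ^+ 2 + x1 * x2) / x2 ^+ 2.
  apply: (mulIf (expf_neq0 2 x2n0)); rewrite mulfVK ?expf_neq0 //.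
  by rewrite -[RHS]subr0 -hN; ring.
by rewrite hw; field.
Qed.

Lemma wconstE (D : int) : (D %% 4)%Z = 1 -> exists M : int, D = 4 * M + 1 /\ wconst D = M%:~R.
Proof.
move=> h; exists (D %/ 4)%Z.
have eD : D = 4 * (D %/ 4)%Z + 1 by rewrite {1}(divz_eq D 4) h mulrC.
by split=> //; rewrite /wconst {1}eD rmorphD rmorphM /=; field.
Qed.

(* A nonzero subgroup of Z is generated by its least positive element. *)
Lemma int_subgroup_cyclic (G : int -> Prop) :
  G 0 -> (forall m n, G m -> G n -> G (m - n)) -> (exists n, G n /\ n != 0) ->
  exists c : int, 0 < c /\ forall n, G n <-> (c %| n)%Z.
Proof.
move=> G0 Gsub [n0 [Gn0 n0nz]].
have Gopp n : G n -> G (- n) by move=> Gn; rewrite -sub0r; apply: Gsub.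
have Gadd m n : G m -> G n -> G (m + n).
  by move=> Gm Gn; rewrite -(opprK n); apply/Gsub/Gopp.
have Gmul c k : G c -> G (k * c).
  move=> Gc; suff Gnat (j : nat) : G (j%:Z * c).
    by case: k => j; [apply: Gnat | rewrite NegzE mulNr; apply/Gopp/Gnat].
  by elim: j => [|j IH]; rewrite ?mul0r // -addn1 PoszD mulrDl mul1r; apply: Gadd.
pose P (n : nat) := is_left (excluded_middle_informative ((0 < n)%N /\ G n)).
have PP n : reflect ((0 < n)%N /\ G n) (P n).
  by rewrite /P; case: excluded_middle_informative => h; constructor.
have exP : exists n, P n.
  exists `|n0|%N; apply/PP; rewrite absz_gt0 n0nz; split=> //.
  by case: n0 Gn0 {n0nz} => k Gk //; have := Gopp _ Gk; rewrite NegzE opprK.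
case: (ex_minnP exP) => c /PP [c0 Gc] cmin.
exists c; split; first by rewrite ltz_nat.
move=> n; split => [Gn | /dvdzP [k ->]]; last exact: Gmul.
have Gr : G (n %% c)%Z.
  have -> : (n %% c)%Z = n - (n %/ c)%Z * c by rewrite {2}(divz_eq n c); ring.
  by apply: Gsub => //; apply: Gmul.
apply: contraT => ndvd.
have [r er] : exists r : nat, (n %% c)%Z = r.
  by exists `|(n %% c)%Z|%N; rewrite gez0_abs // modz_ge0 // gt_eqF // ltz_nat.
have r0 : (0 < r)%N by rewrite lt0n -eqz_nat -er; apply: contraNneq ndvd => /dvdz_mod0P.
have rc : (r < c)%N by rewrite -ltz_nat -er ltz_pmod // ltz_nat.
have Gr' : G r by rewrite -er.
by have := cmin r (introT (PP r) (conj r0 Gr')); rewrite leqNgt rc.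
Qed.

(* A nonzero subgroup of Q whose elements have a common denominator d is
   cyclic; it is the image of a subgroup of Z under n |-> n / d^2. *)
Lemma rat_subgroup_cyclic (H : rat -> Prop) (d : int) :
  d != 0 -> H 0 -> (forall x y, H x -> H y -> H (x - y)) ->
  (forall x, H x -> isint (d%:~R * x)) -> (exists x, H x /\ x != 0) ->
  exists c, 0 < c /\ forall x, H x <-> exists n : int, x = n%:~R * c.
Proof.
move=> d0 H0 Hsub Hden [x0 [Hx0 x0nz]].
pose e : int := d * d.
have e0 : (0 : rat) < e%:~R by rewrite ltr0z /e -expr2 exprn_even_gt0.
have eK (x : rat) : e%:~R * x / e%:~R = x by rewrite mulrAC mulfV ?mul1r ?gt_eqF.
have Hnum x : H x -> exists n : int, e%:~R * x = n%:~R.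
  move=> /Hden /isintP [n hn]; exists (d * n).
  by rewrite /e !rmorphM /= -mulrA hn.
pose G (n : int) := H (n%:~R / e%:~R).
have [c [c0 Gc]] : exists c : int, 0 < c /\ forall n, G n <-> (c %| n)%Z.
  apply: int_subgroup_cyclic; first by rewrite /G mul0r.
    by move=> m n; rewrite /G rmorphB /= mulrBl; apply: Hsub.
  have [n hn] := Hnum _ Hx0; exists n; split; first by rewrite /G -hn eK.
  apply: contra_neq x0nz => n0; apply/eqP.
  by move: hn; rewrite n0 mulr0z => /eqP; rewrite mulf_eq0 (gt_eqF e0).
exists (c%:~R / e%:~R); split; first by apply: divr_gt0 => //; rewrite ltr0z.
move=> x; split => [Hx | [n ->]].
  have [m hm] := Hnum _ Hx.
  have /Gc /dvdzP [n hn] : G m by rewrite /G -hm eK.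
  by exists n; rewrite mulrA -intrM -hn -hm eK.
have : G (n * c) by apply/Gc/dvdz_mull.
by rewrite /G intrM mulrA.
Qed.

Definition Kw : K := (0, 1).

Lemma Kmul_w (D : int) (x : K) : Kmul D Kw x = (x.2 * wconst D, x.1 + x.2).
Proof. by apply: Kext; rewrite /Kmul /=; ring. Qed.

Definition Zspan (u v : K) (x : K) : Prop :=
  exists I J : int, x = Kadd (Kscale I u) (Kscale J v).

Section FracIdeal.
Variables (D : int) (A : K -> Prop).
Hypothesis hA : frac_ideal D A.

Lemma ideal_add x y : A x -> A y -> A (Kadd x y).
Proof. by case: hA => _ H _ _ _; apply: H. Qed.

Lemma ideal_mul_OK r x : in_OK r -> A x -> A (Kmul D r x).
Proof. by case: hA => _ _ H _ _; apply: H. Qed.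

Lemma ideal_scale (n : int) x : A x -> A (Kscale n x).
Proof.
have -> : Kscale n x = Kmul D (n%:~R, 0) x by apply: Kext; rewrite /=; ring.
by apply: ideal_mul_OK; rewrite /in_OK /= !isint_int.
Qed.

Lemma ideal_sub x y : A x -> A y -> A (x.1 - y.1, x.2 - y.2).
Proof.
move=> Ax Ay; have := ideal_add Ax (ideal_scale (-1) Ay).
by congr A; apply: Kext => /=; ring.
Qed.

Lemma ideal_mul_w x : A x -> A (Kmul D Kw x).
Proof. exact: ideal_mul_OK. Qed.

Lemma ideal_Zspan u v x : A u -> A v -> Zspan u v x -> A x.
Proof. by move=> Au Av [I [J ->]]; apply: ideal_add; apply: ideal_scale. Qed.

(* The rational points of A form a nonzero cyclic group: for a nonzero
   alpha in A with d alpha in O_K, alpha * conj(d alpha) = d N(alpha) lies in A. *)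
Lemma ideal_rat_part : 1 < D -> squarefree_int D ->
  exists c, 0 < c /\ forall r, A (r, 0) <-> exists n : int, r = n%:~R * c.
Proof.
move=> D1 hsq; have [A0 _ _ [[p1 p2] [Ap p0]] [d [d0 Hd]]] := hA.
apply: (rat_subgroup_cyclic (H := fun r => A (r, 0)) d0) => //.
- by move=> x y Ax Ay; have := ideal_sub Ax Ay; rewrite /= subr0.
- by move=> x /Hd /andP [].
have /andP [/isintP [n1 hn1] /isintP [n2 hn2]] := Hd _ Ap.
exists (d%:~R * Knorm D (p1, p2)); split.
  have : A (Kmul D ((n1 + n2)%:~R, (- n2)%:~R) (p1, p2)).
    by apply: ideal_mul_OK => //; rewrite /in_OK /= !isint_int.
  congr A; apply: Kext; rewrite /Kmul /Knorm /= rmorphD rmorphN /= -hn1 -hn2 /=; ring.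
rewrite mulf_eq0 negb_or intr_eq0 d0 /=; apply/eqP => hN.
exact/p0/(Knorm_eq0 D1 hsq hN).
Qed.

Lemma ideal_second_coord :
  exists s, 0 < s /\ forall r, (exists x, A x /\ x.2 = r) <-> exists n : int, r = n%:~R * s.
Proof.
have [A0 _ _ [[p1 p2] [Ap p0]] [d [d0 Hd]]] := hA.
apply: (rat_subgroup_cyclic d0).
- by exists Kzero.
- move=> _ _ [x [Ax <-]] [y [Ay <-]]; exists (x.1 - y.1, x.2 - y.2).
  by split => //; apply: ideal_sub.
- by move=> _ [x [/Hd /andP [_ hx] <-]].
have [p20 | p2n0] := eqVneq p2 0; last by exists p2; split => //; exists (p1, p2).
exists p1; split.
  by exists (Kmul D Kw (p1, p2)); split; [apply: ideal_mul_w | rewrite Kmul_w p20 addr0].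
by apply/eqP => p10; apply: p0; rewrite p10 p20.
Qed.

Lemma ideal_standard_basis (M : int) : wconst D = M%:~R -> 1 < D -> squarefree_int D ->
  exists (s : rat) (a t e : int), [/\ 0 < s, 0 < a, t * t + t - M = a * e &
    forall x, A x <-> Zspan (s * a%:~R, 0) (s * t%:~R, s) x].
Proof.
move=> hM D1 hsq.
have [c [c0 Hc]] := ideal_rat_part D1 hsq.
have [s [s0 Hs]] := ideal_second_coord.
have sn0 : s != 0 by rewrite gt_eqF.
have [g [Ag g2]] : exists g, A g /\ g.2 = s by apply/Hs; exists 1; rewrite mul1r.
have [a ha] : exists a : int, c = a%:~R * s.
  apply/Hs; exists (Kmul D Kw (c, 0)); split; first by apply/ideal_mul_w/Hc; exists 1; rewrite mul1r.
  by rewrite Kmul_w /= addr0.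
have [k hk] : exists k : int, g.1 + g.2 = k%:~R * s.
  by apply/Hs; exists (Kmul D Kw g); split; [apply: ideal_mul_w | rewrite Kmul_w].
have hg1 : g.1 = s * (k - 1)%:~R by apply: (addIr g.2); rewrite hk g2 rmorphB /=; ring.
have [j hj] : exists j : int, s * M%:~R - k%:~R * g.1 = j%:~R * c.
  apply/Hc; have := ideal_sub (ideal_mul_w Ag) (ideal_scale k Ag).
  by congr A; apply: Kext; rewrite /= ?hM g2 ?hg1 ?rmorphB /=; ring.
have hMa : M - k * (k - 1) = j * a.
  apply: (@intr_inj rat); apply: (mulIf sn0).
  by rewrite intrM -mulrA -ha -hj hg1 !(rmorphB, rmorphM) /=; ring.
exists s, a, (k - 1), (- j); split => //.
- by rewrite -(ltr0z rat) -(pmulr_lgt0 _ s0) -ha.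
- by rewrite -[M](subrK (k * (k - 1))) hMa; ring.
move=> x; split => [Ax | hx]; last first.
  move: hx; apply: ideal_Zspan; first by apply/Hc; exists 1; rewrite mul1r ha mulrC.
  by rewrite -hg1 -g2; case: g Ag {g2 hg1 hk hj}.
have [J hJ] : exists J : int, x.2 = J%:~R * s by apply/Hs; exists x.
have [I hI] : exists I : int, x.1 - J%:~R * g.1 = I%:~R * c.
  apply/Hc; have := ideal_sub Ax (ideal_scale J Ag).
  by congr A; apply: Kext; rewrite //= hJ g2; ring.
exists I, J; apply: Kext => /=; last by rewrite hJ; ring.
by rewrite -[LHS](subrK (J%:~R * g.1)) hI ha hg1; ring.
Qed.

End FracIdeal.

Lemma Zspan_add u v x y : Zspan u v x -> Zspan u v y -> Zspan u v (Kadd x y).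
Proof.
move=> [I [J ->]] [I' [J' ->]]; exists (I + I'), (J + J').
by apply: Kext; rewrite /= !rmorphD /=; ring.
Qed.

Lemma Zspan_scale u v n x : Zspan u v x -> Zspan u v (Kscale n x).
Proof.
move=> [I [J ->]]; exists (n * I), (n * J).
by apply: Kext; rewrite /= !rmorphM /=; ring.
Qed.

Lemma Zspan_l u v : Zspan u v u.
Proof. by exists 1, 0; apply: Kext; rewrite /=; ring. Qed.

Lemma Zspan_r u v : Zspan u v v.
Proof. by exists 0, 1; apply: Kext; rewrite /=; ring. Qed.

Lemma Zspan_zero u v : Zspan u v Kzero.
Proof. by exists 0, 0; apply: Kext; rewrite /=; ring. Qed.

Lemma Kmul_Zspan D u v x y : Zspan u v x -> Zspan u v y ->
  exists I J L : int, Kmul D x y =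
    Kadd (Kscale I (Kmul D u u)) (Kadd (Kscale J (Kmul D u v)) (Kscale L (Kmul D v v))).
Proof.
move=> [I [J ->]] [I' [J' ->]]; exists (I * I'), (I * J' + J * I'), (J * J').
by apply: Kext; rewrite /Kmul /= ?(rmorphD, rmorphM) /=; ring.
Qed.

Definition Ksum (D : int) (l : seq (K * K)) : K :=
  foldr (fun p acc => Kadd (Kmul D p.1 p.2) acc) Kzero l.

Lemma Ksum_cat D l1 l2 : Ksum D (l1 ++ l2) = Kadd (Ksum D l1) (Ksum D l2).
Proof.
elim: l1 => [|p l IH] /=; first by apply: Kext; rewrite /= add0r.
by rewrite /Ksum /= -/(Ksum D _) IH; apply: Kext; rewrite /=; ring.
Qed.

Section IdealProduct.
Variables (D : int) (A B : K -> Prop).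

Lemma ideal_mul_prod x y : A x -> B y -> ideal_mul D A B (Kmul D x y).
Proof.
move=> Ax By; exists [:: (x, y)]; split; first by move=> p; rewrite inE => /eqP ->.
by apply: Kext; rewrite /= addr0.
Qed.

Lemma ideal_mul_add x y :
  ideal_mul D A B x -> ideal_mul D A B y -> ideal_mul D A B (Kadd x y).
Proof.
move=> [l1 [H1 ->]] [l2 [H2 ->]]; exists (l1 ++ l2); split; last exact: esym (Ksum_cat D l1 l2).
by move=> p; rewrite mem_cat => /orP [/H1|/H2].
Qed.

Lemma ideal_mul_scale n x : frac_ideal D A ->
  ideal_mul D A B x -> ideal_mul D A B (Kscale n x).
Proof.
move=> hA [l [Hl ->]]; exists [seq (Kscale n p.1, p.2) | p <- l]; split.
  by move=> _ /mapP [q /Hl [Aq Bq] ->] /=; split => //; apply: (ideal_scale hA).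
elim: l {Hl} => [|p l IH] /=; first by apply: Kext; rewrite /= mulr0.
by rewrite -IH; apply: Kext; rewrite /Kmul /=; ring.
Qed.

Lemma ideal_mul_Zspan u v : (forall x y, A x -> B y -> Zspan u v (Kmul D x y)) ->
  forall x, ideal_mul D A B x -> Zspan u v x.
Proof.
move=> H x [l [Hl ->]]; elim: l Hl => [|p l IH] Hl /=; first exact: Zspan_zero.
apply: Zspan_add; first by have [] := Hl p (mem_head _ _); apply: H.
by apply: IH => q qin; apply: Hl; rewrite inE qin orbT.
Qed.

End IdealProduct.

Lemma Zbasis_in (P : K -> Prop) u v : Zbasis P u v -> P u /\ P v.
Proof.
by move=> [_ H]; split; apply/H; [apply: Zspan_l | apply: Zspan_r].
Qed.

Lemma Kdet_Zspan u v (m11 m12 m21 m22 : int) :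
  Kdet (Kadd (Kscale m11 u) (Kscale m12 v)) (Kadd (Kscale m21 u) (Kscale m22 v)) =
  (m11 * m22 - m12 * m21)%:~R * Kdet u v.
Proof. by rewrite /Kdet /= rmorphB !rmorphM /=; ring. Qed.

(* Two Z-bases of the same lattice differ by a matrix in GL_2(Z), so the
   absolute value of their determinant is the same. *)
Lemma Zbasis_det (P : K -> Prop) v1 v2 u1 u2 :
  Zbasis P v1 v2 -> Zbasis P u1 u2 -> `|Kdet v1 v2| = `|Kdet u1 u2|.
Proof.
move=> Bv Bu; have [Pv1 Pv2] := Zbasis_in Bv; have [Pu1 Pu2] := Zbasis_in Bu.
case: Bv => dv Hv; case: Bu => du Hu.
have [m11 [m12 E1]] := (Hv u1).1 Pu1; have [m21 [m22 E2]] := (Hv u2).1 Pu2.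
have [n11 [n12 F1]] := (Hu v1).1 Pv1; have [n21 [n22 F2]] := (Hu v2).1 Pv2.
set dM := m11 * m22 - m12 * m21; set dN := n11 * n22 - n12 * n21.
have dU : Kdet u1 u2 = dM%:~R * Kdet v1 v2 by rewrite E1 E2 Kdet_Zspan.
have dV : Kdet v1 v2 = dN%:~R * Kdet u1 u2 by rewrite F1 F2 Kdet_Zspan.
have hdet : dN * dM = 1.
  apply: (@intr_inj rat); apply: (mulIf dv).
  by rewrite mul1r intrM -mulrA -dU -dV.
have : (`|dN| * `|dM|)%N = 1%N by rewrite -abszM hdet.
move/eqP; rewrite muln_eq1 => /andP [_ /eqP dM1].
by rewrite dU normrM -intr_norm -abszE dM1 mul1r.
Qed.

Lemma ideal_norm_Zbasis (P : K -> Prop) u v : Zbasis P u v -> ideal_norm P = `|Kdet u v|.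
Proof.
move=> B; rewrite /ideal_norm.
have ex : exists q, exists v1 v2, Zbasis P v1 v2 /\ q = `|Kdet v1 v2|.
  by exists `|Kdet u v|, u, v.
have [v1 [v2 [B' ->]]] := epsilon_spec (inhabits 0) _ ex.
exact: Zbasis_det B' B.
Qed.

(* The square of the lattice Z beta1 + Z beta2, beta1 = s a, beta2 = s (t + w),
   where (t + w)^2 = (2t + 1)(t + w) - a e.  Given a = a' h, 2t + 1 = c' h and
   the Bezout relations x0 a' + y0 c' = 1, p0 h + q0 e = 1, the products
   G11, G12, G22 and the vectors sqb1, sqb2 are integral combinations of each
   other, so sqb1, sqb2 is a Z-basis of A^2. *)
Section SquareLattice.
Variables (D M a t e h a' c' x0 y0 p0 q0 : int) (s : rat).
Hypotheses (hM : wconst D = M%:~R) (hae : t * t + t - M = a * e)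
  (ha : a = a' * h) (hc : 2 * t + 1 = c' * h)
  (hxy : x0 * a' + y0 * c' = 1) (hpq : p0 * h + q0 * e = 1)
  (a'0 : a' != 0) (h0 : h != 0).

Let beta1 : K := (s * a%:~R, 0).
Let beta2 : K := (s * t%:~R, s).
Definition G11 : K := Kmul D beta1 beta1.
Definition G12 : K := Kmul D beta1 beta2.
Definition G22 : K := Kmul D beta2 beta2.
Definition sqb1 : K := (s ^+ 2 * (a * a')%:~R, 0).
Definition sqb2 : K := (s ^+ 2 * (h * t - y0 * a * e)%:~R, s ^+ 2 * h%:~R).

Let rat_eq (m n : int) : m = n -> m%:~R = n%:~R :> rat.
Proof. by move->. Qed.

Let hMr : (M%:~R : rat) = t%:~R ^+ 2 + t%:~R - a%:~R * e%:~R.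
Proof.
have := rat_eq hae; rewrite !(rmorphD, rmorphN, rmorphM) /= => <-; ring.
Qed.
Let har : (a%:~R : rat) = a'%:~R * h%:~R.
Proof. by rewrite ha rmorphM. Qed.
Let htr : (t%:~R : rat) = (c'%:~R * h%:~R - 1) / 2.
Proof. by have := rat_eq hc; rewrite !(rmorphD, rmorphM) /= => <-; field. Qed.
Let h0r : (h%:~R : rat) != 0. Proof. by rewrite intr_eq0. Qed.
Let a0r : (a'%:~R : rat) != 0. Proof. by rewrite intr_eq0. Qed.
Let hxr : (x0%:~R : rat) = (1 - y0%:~R * c'%:~R) / a'%:~R.
Proof.
have := rat_eq hxy; rewrite !(rmorphD, rmorphM) rmorph1 /= => E.
by apply: (mulIf a0r); rewrite divfK //; apply/eqP; rewrite eq_sym subr_eq E.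
Qed.
Let hpr : (p0%:~R : rat) = (1 - q0%:~R * e%:~R) / h%:~R.
Proof.
have := rat_eq hpq; rewrite !(rmorphD, rmorphM) rmorph1 /= => E.
by apply: (mulIf h0r); rewrite divfK //; apply/eqP; rewrite eq_sym subr_eq E.
Qed.

Ltac solve_id := apply: Kext;
  rewrite /sqb1 /sqb2 /G11 /G12 /G22 /Kmul /Kscale /Kadd /= ?hM ?(rmorphN, rmorphM, rmorphB) /=;
  rewrite ?hMr ?hxr ?hpr ?har ?htr; field; rewrite ?h0r ?a0r //.

Lemma G11E : G11 = Kscale h sqb1.
Proof. solve_id. Qed.
Lemma G12E : G12 = Kadd (Kscale (y0 * e) sqb1) (Kscale a' sqb2).
Proof. solve_id. Qed.
Lemma G22E : G22 = Kadd (Kscale (- (x0 * e)) sqb1) (Kscale c' sqb2).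
Proof. solve_id. Qed.
Lemma sqb1E : sqb1 = Kadd (Kscale p0 G11) (Kscale q0 (Kadd (Kscale c' G12) (Kscale (- a') G22))).
Proof. solve_id. Qed.
Lemma sqb2E : sqb2 = Kadd (Kscale x0 G12) (Kscale y0 G22).
Proof. solve_id. Qed.

Lemma sqb_det : Kdet sqb1 sqb2 = s ^+ 4 * a%:~R ^+ 2.
Proof. by rewrite /Kdet /sqb1 /sqb2 /= ha !rmorphM /=; ring. Qed.

Variable A : K -> Prop.
Hypotheses (hA : frac_ideal D A) (hAE : forall x, A x <-> Zspan beta1 beta2 x)
  (s0 : s != 0).

Lemma sqb_Zbasis : Zbasis (ideal_mul D A A) sqb1 sqb2.
Proof.
have Ab1 : A beta1 by apply/hAE/Zspan_l.
have Ab2 : A beta2 by apply/hAE/Zspan_r.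
split.
  by rewrite sqb_det mulf_neq0 ?expf_neq0 // intr_eq0 ha mulf_neq0.
move=> x; split.
  apply: ideal_mul_Zspan => y z /hAE Ay /hAE Az.
  have [I [J [L ->]]] := Kmul_Zspan D Ay Az.
  rewrite -/G11 -/G12 -/G22 G11E G12E G22E.
  by repeat first [exact: Zspan_l | exact: Zspan_r | apply: Zspan_scale | apply: Zspan_add].
move=> [I [J ->]]; rewrite sqb1E sqb2E.
by repeat first [apply: ideal_mul_add | apply: ideal_mul_scale | apply: ideal_mul_prod].
Qed.

End SquareLattice.

Definition qform (a c e X Y : int) : int := a * X ^+ 2 + c * X * Y + e * Y ^+ 2.

Lemma Euclidz (p : nat) (m n : int) : prime p ->
  (p%:Z %| m * n)%Z = (p%:Z %| m)%Z || (p%:Z %| n)%Z.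
Proof. by move=> pp; rewrite !dvdzE abszM Euclid_dvdM. Qed.

Lemma prime_nondvd_qform (p : nat) (a c e X Y : int) : prime p ->
  ~~ [&& (p%:Z %| a)%Z, (p%:Z %| c)%Z & (p%:Z %| e)%Z] ->
  (p%:Z %| X)%Z = (p%:Z %| a)%Z && ~~ (p%:Z %| e)%Z ->
  (p%:Z %| Y)%Z = ~~ (p%:Z %| a)%Z ->
  ~~ (p%:Z %| qform a c e X Y)%Z.
Proof.
move=> pp prim hX hY; apply/negP => pf.
have dvd_rest T R : qform a c e X Y - T = R -> (p%:Z %| T)%Z -> (p%:Z %| R)%Z.
  by move=> <- hT; apply: rpredB.
case pa: (p%:Z %| a)%Z; rewrite ?pa /= in hX hY prim; last first.
  have /dvd_rest : qform a c e X Y - Y * (c * X + e * Y) = a * (X * X).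
    by rewrite /qform; ring.
  by move/(_ (dvdz_mulr _ hY)); rewrite !Euclidz // pa hX.
case pe: (p%:Z %| e)%Z; rewrite ?pe /= ?andbT in hX prim.
- have /dvd_rest : qform a c e X Y - (a * X ^+ 2 + e * Y ^+ 2) = c * (X * Y).
    by rewrite /qform; ring.
  move/(_ (rpredD (dvdz_mulr _ pa) (dvdz_mulr _ pe))).
  by rewrite !Euclidz // hX hY !orbF (negbTE prim).
- have /dvd_rest : qform a c e X Y - X * (a * X + c * Y) = e * (Y * Y).
    by rewrite /qform; ring.
  by move/(_ (dvdz_mulr _ hX)); rewrite !Euclidz // pe hY.
Qed.

Lemma dvd_prod_primes (p : nat) (r : seq nat) (P : pred nat) : prime p -> all prime r ->
  (p %| \prod_(i <- r | P i) i)%N = (p \in r) && P p.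
Proof.
move=> pp; elim: r => [|i r IH] /=.
  by move=> _; rewrite big_nil dvdn1 ?in_nil; case: eqP pp => // ->.
move=> /andP [pi ar]; rewrite big_cons inE; case Pi: (P i).
  rewrite Euclid_dvdM // IH // dvdn_prime2 //.
  by case: (p =P i) => [->|] /=; rewrite ?Pi ?andbT.
by rewrite IH //; case: (p =P i) => [->|] /=; rewrite ?Pi ?andbF.
Qed.

Lemma qform_coprime_value (a c e : int) (b : nat) : (0 < b)%N ->
  (forall p, prime p -> ~~ [&& (p%:Z %| a)%Z, (p%:Z %| c)%Z & (p%:Z %| e)%Z]) ->
  exists X Y : int, coprimez (qform a c e X Y) b.
Proof.
move=> b0 prim.
pose X := (\prod_(p <- primes b | (p %| `|a|)%N && ~~ (p %| `|e|)%N) p)%N.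
pose Y := (\prod_(p <- primes b | ~~ (p %| `|a|)%N) p)%N.
exists X, Y; apply: contraT => ncop.
have g1 : (1 < gcdn `|qform a c e X Y| b)%N.
  rewrite ltn_neqAle eq_sym gcdn_gt0 b0 orbT andbT.
  by move: ncop; rewrite coprimezE /coprime.
have pp := pdiv_prime g1; set p := pdiv _ in pp.
have pf : (p%:Z %| qform a c e X Y)%Z.
  by rewrite dvdzE; apply: dvdn_trans (pdiv_dvd _) (dvdn_gcdl _ _).
have pin : p \in primes b.
  by rewrite mem_primes pp b0; apply: dvdn_trans (pdiv_dvd _) (dvdn_gcdr _ _).
have allp : all prime (primes b) by apply/allP => q; rewrite mem_primes => /andP [].
suff : ~~ (p%:Z %| qform a c e X Y)%Z by rewrite pf.
apply: prime_nondvd_qform => //; first exact: prim.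
  by rewrite !dvdzE /= dvd_prod_primes // pin.
by rewrite !dvdzE /= dvd_prod_primes // pin.
Qed.

Lemma sqf_disc_primitive (D a c e : int) : squarefree_int D -> D = c * c - 4 * (a * e) ->
  forall p, prime p -> ~~ [&& (p%:Z %| a)%Z, (p%:Z %| c)%Z & (p%:Z %| e)%Z].
Proof.
move=> hsq eD p pp; apply/negP => /and3P [pa pc pe].
apply: (negP (hsq p pp)); rewrite eD; apply: rpredB.
  by rewrite PoszM; apply: dvdz_mul.
by apply: dvdz_mull; rewrite PoszM; apply: dvdz_mul.
Qed.

Lemma primitive_gcd_coprime (a c e : int) :
  (forall p, prime p -> ~~ [&& (p%:Z %| a)%Z, (p%:Z %| c)%Z & (p%:Z %| e)%Z]) ->
  coprimez (gcdz a c) e.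
Proof.
move=> prim; apply: contraT => ncop.
pose g := gcdn `|gcdz a c| `|e|.
have [p pp pg] : exists2 p : nat, prime p & (p %| g)%N.
  have [g0 | gpos] := posnP g; first by exists 2%N; rewrite ?g0.
  have g1 : (1 < g)%N.
    by rewrite ltn_neqAle eq_sym gpos andbT; move: ncop; rewrite coprimezE.
  by have [q qp qg] := pdivP g1; exists q.
have ph : (p%:Z %| gcdz a c)%Z by rewrite dvdzE; apply: dvdn_trans pg (dvdn_gcdl _ _).
have pe : (p%:Z %| e)%Z by rewrite dvdzE; apply: dvdn_trans pg (dvdn_gcdr _ _).
by move: (prim p pp); rewrite (dvdz_trans ph (dvdz_gcdl a c)) (dvdz_trans ph (dvdz_gcdr a c)) pe.
Qed.

Lemma ideal_sq_norm (D M : int) (A : K -> Prop) (s : rat) (a t e : int) :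
  frac_ideal D A -> wconst D = M%:~R -> 0 < s -> 0 < a -> t * t + t - M = a * e ->
  (forall p, prime p -> ~~ [&& (p%:Z %| a)%Z, (p%:Z %| 2 * t + 1)%Z & (p%:Z %| e)%Z]) ->
  (forall x, A x <-> Zspan (s * a%:~R, 0) (s * t%:~R, s) x) ->
  ideal_norm (ideal_mul D A A) = s ^+ 4 * a%:~R ^+ 2.
Proof.
move=> hA hM s0 a0 hae prim hAE.
pose h := gcdz a (2 * t + 1).
have [x0 [y0 hxyh]] := Bezoutz a (2 * t + 1).
have [p0 [q0 hpq]] := Bezoutz h e; rewrite (eqP (primitive_gcd_coprime prim)) in hpq.
have ha : a = (a %/ h)%Z * h by rewrite divzK // dvdz_gcdl.
have hc : 2 * t + 1 = ((2 * t + 1) %/ h)%Z * h by rewrite divzK // dvdz_gcdr.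
have h0 : h != 0 by apply: contraTneq a0 => h0; rewrite ha h0 mulr0.
have a'0 : (a %/ h)%Z != 0 by apply: contraTneq a0 => a'0; rewrite ha a'0 mul0r.
have hxy : x0 * (a %/ h)%Z + y0 * ((2 * t + 1) %/ h)%Z = 1.
  by apply: (mulIf h0); rewrite mul1r mulrDl -!mulrA -ha -hc.
rewrite (ideal_norm_Zbasis (sqb_Zbasis hM hae ha hc hxy hpq a'0 h0 hA hAE _)) ?gt_eqF //.
by rewrite sqb_det // ger0_norm // mulr_ge0 ?exprn_even_ge0.
Qed.

Lemma Knorm_standard (D M : int) (s : rat) (a t e X Y : int) :
  wconst D = M%:~R -> t * t + t - M = a * e ->
  Knorm D (Kadd (Kscale X (s * a%:~R, 0)) (Kscale Y (s * t%:~R, s))) =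
  s ^+ 2 * a%:~R * (qform a (2 * t + 1) e X Y)%:~R.
Proof.
move=> hM hae; have hMr : (M%:~R : rat) = t%:~R ^+ 2 + t%:~R - a%:~R * e%:~R.
  by have := congr1 (intr : int -> rat) hae; rewrite !(rmorphD, rmorphN, rmorphM) /= => <-; ring.
by rewrite /Knorm /qform hM hMr /= !(rmorphD, rmorphM, rmorphXn) /=; ring.
Qed.

Unset Implicit Arguments.

Theorem lemma3p4 (D : int) (hD1 : 1 < D) (hD4 : (D %% 4)%Z = 1)
    (hsqf : squarefree_int D)
    (A : K -> Prop) (hA : frac_ideal D A) (b : nat) (hb : (0 < b)%N) :
  exists lam : K, ideal_mul D A A lam /\
    exists z : int,
      Knorm D lam / ideal_norm (ideal_mul D A A) = z%:~R /\
      (z = 1 %[mod b%:Z])%Z.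
Proof.
have [M [eD hM]] := wconstE hD4.
have [s [a [t [e [s0 a0 hae hAE]]]]] := ideal_standard_basis hA hM hD1 hsqf.
have disc : D = (2 * t + 1) * (2 * t + 1) - 4 * (a * e) by rewrite -hae eD; ring.
have prim := sqf_disc_primitive hsqf disc.
have [X [Y /coprimezP [[u v] /= huv]]] := qform_coprime_value hb prim.
set f := qform _ _ _ X Y in huv.
pose alpha := Kadd (Kscale X (s * a%:~R, 0)) (Kscale Y (s * t%:~R, s)).
exists (Kscale u (Kmul D alpha alpha)); split.
  by apply: ideal_mul_scale => //; apply: ideal_mul_prod; apply/hAE; exists X, Y.
exists ((u * f) ^+ 2); split.
  rewrite (ideal_sq_norm hA hM s0 a0 hae prim hAE) Knorm_scale Knorm_mul.
  rewrite (Knorm_standard _ _ _ hM hae) -/f !(rmorphXn, rmorphM) /=.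
  by field; rewrite intr_eq0 !gt_eqF.
apply/eqP; rewrite eqz_mod_dvd.
have -> : (u * f) ^+ 2 - 1 = (u * f + 1) * (u * f - 1) by ring.
have -> : u * f - 1 = - (v * b) by rewrite -huv; ring.
by rewrite dvdz_mull // rpredN dvdz_mull.
Qed.
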